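(* Let $P$ be a Coxeter polygon in $\mathbb H^2$, let $S$ be the set of reflections in its sides, and let $\Gamma = \langle S\rangle$. Let $w \in \Gamma$, fix an expression of $w$ as a word of minimal length in the elements of $S$, and let $T \subset S$ be the set of elements occurring in this expression. Then for every $x \in P$ and every $s \in T$ we have $d(x, wx) \ge d(x, sx)$.
   Context: A Coxeter polygon is a finite-area region of $\mathbb H^2$ bounded by finitely many geodesics such that each angle between adjacent sides is of the form $\pi/m$ for an integer $m\ge 2$. *)

(* Model of H^2: the upper half-plane { (x,y) : y > 0 } in R*R. *)
From HB Require Import structures.
From mathcomp Require Import all_boot all_order all_algebra.
From mathcomp Require Import all_classical all_reals all_analysis.
Set Implicit Arguments. Unset Strict Implicit. Unset Printing Implicit Defensive.
Import Order.TTheory GRing.Theory Num.Theory.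
Local Open Scope ring_scope.

Section Hyp.
Variable R : realType.

Definition inH (p : R * R) : Prop := 0 < p.2.

(* hyperbolic distance: arcosh (1 + |p-q|^2 / (2 p.2 q.2)),
   with arcosh t = ln (t + sqrt (t^2 - 1)) *)
Definition hdist (p q : R * R) : R :=
  let t := 1 + ((p.1 - q.1) ^+ 2 + (p.2 - q.2) ^+ 2) / (2 * p.2 * q.2) in
  ln (t + Num.sqrt (t ^+ 2 - 1)).

(* A geodesic line is encoded by g = (a, b, c) with b^2 - 4ac > 0; it is the
   set { (x,y) in H^2 : a (x^2 + y^2) + b x + c = 0 }, i.e. a vertical line
   (a = 0) or a half-circle centred on the real axis (a <> 0).
   The closed half-plane bounded by it is { gfun g <= 0 }. *)
Definition gfun (g : R * R * R) (p : R * R) : R :=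
  g.1.1 * (p.1 ^+ 2 + p.2 ^+ 2) + g.1.2 * p.1 + g.2.

Definition is_geodesic (g : R * R * R) : Prop :=
  0 < g.1.2 ^+ 2 - 4 * g.1.1 * g.2.

Definition ggrad (g : R * R * R) (p : R * R) : R * R :=
  (2 * g.1.1 * p.1 + g.1.2, 2 * g.1.1 * p.2).

Definition refl (g : R * R * R) (p : R * R) : R * R :=
  let a := g.1.1 in let b := g.1.2 in let c := g.2 in
  if a == 0 then (- p.1 - 2 * c / b, p.2)
  else
    let h := - b / (2 * a) in
    let r2 := (b ^+ 2 - 4 * a * c) / (4 * a ^+ 2) in
    let n := (p.1 - h) ^+ 2 + p.2 ^+ 2 in
    (h + r2 * (p.1 - h) / n, r2 * p.2 / n).

Definition polygon n (G : 'I_n -> R * R * R) : set (R * R) :=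
  [set p | inH p /\ forall i, gfun (G i) p <= 0].

(* Euclidean angle between two nonzero vectors (the half-plane model is
   conformal, so hyperbolic angles are Euclidean angles) *)
Definition vangle (u v : R * R) : R :=
  acos ((u.1 * v.1 + u.2 * v.2) /
        (Num.sqrt (u.1 ^+ 2 + u.2 ^+ 2) * Num.sqrt (v.1 ^+ 2 + v.2 ^+ 2))).

(* interior angle at a corner p of the polygon between sides i and j:
   pi minus the angle between the outward normals *)
Definition interior_angle (gi gj : R * R * R) (p : R * R) : R :=
  pi - vangle (ggrad gi p) (ggrad gj p).

Definition harea (A : set (R * R)) : \bar R :=
  (\int[(@lebesgue_measure R \x @lebesgue_measure R)%E]_(p in A)
     ((p.2 ^+ 2)^-1)%:E)%E.

Definition coxeter_polygon n (G : 'I_n -> R * R * R) : Prop :=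
  let P := polygon G in
  [/\ (forall i, is_geodesic (G i)),
      (exists p, inH p /\ forall i, gfun (G i) p < 0),
      (* every bounding geodesic carries a genuine side (a nondegenerate
         segment of the boundary) *)
      (forall i, exists p q, p <> q /\ P p /\ P q /\
                    gfun (G i) p = 0 /\ gfun (G i) q = 0),
      (harea P < +oo)%E &
      (forall i j p, i != j -> P p -> gfun (G i) p = 0 -> gfun (G j) p = 0 ->
         exists2 m : nat, (2 <= m)%N & interior_angle (G i) (G j) p = pi / m%:R)].

(* the element of Gamma represented by a word in the generators:
   [:: i1; ...; ik] represents s_{i1} o ... o s_{ik} *)
Definition word_eval n (G : 'I_n -> R * R * R) (w : seq 'I_n) : R * R -> R * R :=
  foldr (fun i f => refl (G i) \o f) id w.

Definition same_elt n (G : 'I_n -> R * R * R) (w w' : seq 'I_n) : Prop :=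
  forall p, inH p -> word_eval G w p = word_eval G w' p.

Definition reduced_word n (G : 'I_n -> R * R * R) (w : seq 'I_n) : Prop :=
  forall w', same_elt G w w' -> (size w <= size w')%N.

End Hyp.

From HB Require Import structures.
From mathcomp Require Import all_boot all_order all_algebra.
From mathcomp Require Import all_classical all_reals all_analysis.
From mathcomp Require Import ring lra zify.
Set Implicit Arguments. Unset Strict Implicit. Unset Printing Implicit Defensive.
Import Order.TTheory GRing.Theory Num.Theory.
Local Open Scope ring_scope.

(* Send the upper half-plane to the hyperboloid [bform x x = -1] of the Lorentz
   form whose quadratic form is the discriminant [b^2 - 4ac] of a geodesic
   [(a, b, c)].  Reflections in the sides become linear reflections in their
   unit normals [root i], [P] becomes [{x | bform x (root i) <= 0 for all i}]
   and [cosh d(x, y) = - bform x y].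

   Vinberg's argument gives [bform (root i) (root j) <= 0] for [i != j]: sides
   meeting at angle [pi/m] give [- cos (pi/m)], and sides that do not meet give
   a value [<= -1].  Tits' lemma then holds as for Coxeter groups: if [w s] is
   reduced, [w (root s)] pairs nonpositively with every point of [P].  It
   reduces to dihedral words, where the coefficients of [w (root s)] are
   Chebyshev numbers [U_k (2 cos (pi/m))], nonnegative because reduced dihedral
   words have fewer than [m] letters.

   Finally, for [w = u r] we get [cosh d(x, w x) = cosh d(x, u x) +
   2 bform x (root r) * bform x (u (root r))], so each letter can only increase
   the displacement of [x], and at the first occurrence of [s] it is already at
   least [1 + 2 (bform x (root s))^2 = cosh d(x, s x)]. *)

Section LorentzForm.
Variable R : realFieldType.
Local Notation vec := (R * R * R)%type.
Implicit Types (u v w g : vec).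

(* The polarisation of the discriminant [b^2 - 4ac] of [is_geodesic]; it has
   signature (2,1), geodesics are its spacelike vectors. *)
Definition bform u v : R := u.1.2 * v.1.2 - 2 * (u.1.1 * v.2 + u.2 * v.1.1).

Definition vadd u v : vec := (u.1.1 + v.1.1, u.1.2 + v.1.2, u.2 + v.2).
Definition vscale (k : R) u : vec := (k * u.1.1, k * u.1.2, k * u.2).
Definition vrefl g v : vec := vadd v (vscale (- (2 * bform v g / bform g g)) g).

Definition det3 u v w : R :=
  u.1.1 * (v.1.2 * w.2 - v.2 * w.1.2) - u.1.2 * (v.1.1 * w.2 - v.2 * w.1.1)
  + u.2 * (v.1.1 * w.1.2 - v.1.2 * w.1.1).

Definition gram3 u v w : R :=
  bform u u * (bform v v * bform w w - bform v w ^+ 2)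
  - bform u v * (bform u v * bform w w - bform v w * bform u w)
  + bform u w * (bform u v * bform v w - bform v v * bform u w).

Lemma vec_ext u v : u.1.1 = v.1.1 -> u.1.2 = v.1.2 -> u.2 = v.2 -> u = v.
Proof. by case: u => [[a b] c]; case: v => [[a' b'] c'] /= -> -> ->. Qed.

Lemma bformC u v : bform u v = bform v u.
Proof. rewrite /bform; ring. Qed.
Lemma bformDl u v w : bform (vadd u v) w = bform u w + bform v w.
Proof. rewrite /bform /vadd /=; ring. Qed.
Lemma bformDr u v w : bform u (vadd v w) = bform u v + bform u w.
Proof. rewrite /bform /vadd /=; ring. Qed.
Lemma bformZl k u v : bform (vscale k u) v = k * bform u v.
Proof. rewrite /bform /vscale /=; ring. Qed.
Lemma bformZr k u v : bform u (vscale k v) = k * bform u v.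
Proof. rewrite /bform /vscale /=; ring. Qed.
Lemma bform0l v : bform (0, 0, 0) v = 0.
Proof. rewrite /bform /=; ring. Qed.

Lemma vreflD g u v : vrefl g (vadd u v) = vadd (vrefl g u) (vrefl g v).
Proof. by apply: vec_ext; rewrite /= /bform /=; ring. Qed.
Lemma vreflZ g k u : vrefl g (vscale k u) = vscale k (vrefl g u).
Proof. by apply: vec_ext; rewrite /= /bform /=; ring. Qed.

Section NonIsotropic.
Variable g : vec.
Hypothesis gg0 : bform g g != 0.

Lemma bform_vrefl u v : bform (vrefl g u) (vrefl g v) = bform u v.
Proof.
by move: gg0; rewrite /vrefl /vadd /vscale /bform /= => h; field; exact: h.
Qed.

Lemma vreflK : involutive (vrefl g).
Proof.
move=> u; move: gg0; rewrite /bform => h.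
by apply: vec_ext; rewrite /vrefl /vadd /vscale /bform /=; field; exact: h.
Qed.

Lemma det3_vrefl u v w : det3 (vrefl g u) (vrefl g v) (vrefl g w) = - det3 u v w.
Proof.
by move: gg0; rewrite /det3 /vrefl /vadd /vscale /bform /= => h; field; exact: h.
Qed.

End NonIsotropic.

Lemma gram3E u v w : gram3 u v w = -4 * det3 u v w ^+ 2.
Proof.
case: u => [[a1 b1] c1]; case: v => [[a2 b2] c2]; case: w => [[a3 b3] c3].
rewrite /gram3 /det3 /bform /=; ring.
Qed.

(* Cramer's rule: [det3 x1 x2 x3 * z] is a combination of the [bform z xk]. *)
Lemma bform_orth_det3 z x1 x2 x3 : det3 x1 x2 x3 != 0 ->
  bform z x1 = 0 -> bform z x2 = 0 -> bform z x3 = 0 -> z = (0, 0, 0).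
Proof.
case: z => [[a b] c]; case: x1 => [[a1 b1] c1]; case: x2 => [[a2 b2] c2].
case: x3 => [[a3 b3] c3]; rewrite /det3 /bform /= => hd h1 h2 h3.
set D := (X in X != 0) in hd.
have ec : D * c = 0.
  have -> : D * c = - ((b * b1 - 2 * (a * c1 + c * a1)) * (b2 * c3 - c2 * b3)
    + (b * b2 - 2 * (a * c2 + c * a2)) * (b3 * c1 - c3 * b1)
    + (b * b3 - 2 * (a * c3 + c * a3)) * (b1 * c2 - c1 * b2)) / 2 by rewrite /D; field.
  by rewrite h1 h2 h3; ring.
have eb : D * b = 0.
  have -> : D * b = (b * b1 - 2 * (a * c1 + c * a1)) * (c2 * a3 - a2 * c3)
    + (b * b2 - 2 * (a * c2 + c * a2)) * (c3 * a1 - a3 * c1)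
    + (b * b3 - 2 * (a * c3 + c * a3)) * (c1 * a2 - a1 * c2) by rewrite /D; ring.
  by rewrite h1 h2 h3; ring.
have ea : D * a = 0.
  have -> : D * a = - ((b * b1 - 2 * (a * c1 + c * a1)) * (a2 * b3 - b2 * a3)
    + (b * b2 - 2 * (a * c2 + c * a2)) * (a3 * b1 - b3 * a1)
    + (b * b3 - 2 * (a * c3 + c * a3)) * (a1 * b2 - b1 * a2)) / 2 by rewrite /D; field.
  by rewrite h1 h2 h3; ring.
move/eqP: ec; move/eqP: eb; move/eqP: ea.
by rewrite !mulf_eq0 (negbTE hd) /= => /eqP -> /eqP -> /eqP ->.
Qed.

Lemma bform_orth_gram3 z x1 x2 x3 : gram3 x1 x2 x3 != 0 ->
  bform z x1 = 0 -> bform z x2 = 0 -> bform z x3 = 0 -> z = (0, 0, 0).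
Proof.
move=> hg; apply: bform_orth_det3; apply: contraNneq hg => h0.
by rewrite gram3E h0 expr0n /= mulr0.
Qed.

Definition lcross u v : vec :=
  (- (u.1.1 * v.1.2 - u.1.2 * v.1.1) / 2, u.2 * v.1.1 - u.1.1 * v.2,
   - (u.1.2 * v.2 - u.2 * v.1.2) / 2).

Lemma bform_lcrossl u v : bform (lcross u v) u = 0.
Proof. by rewrite /lcross /bform /=; field. Qed.
Lemma bform_lcrossr u v : bform (lcross u v) v = 0.
Proof. by rewrite /lcross /bform /=; field. Qed.
Lemma bform_lcross u v :
  4 * bform (lcross u v) (lcross u v) = bform u v ^+ 2 - bform u u * bform v v.
Proof. by rewrite /lcross /bform /=; field. Qed.

Lemma timelike_first_neq0 u : bform u u < 0 -> u.1.1 != 0.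
Proof.
case: u => [[a b] c]; rewrite /bform /= => h; apply: contraTneq h => ->.
by rewrite mul0r mulr0 add0r mulr0 subr0 -leNgt -expr2 sqr_ge0.
Qed.

End LorentzForm.

Section Hyperboloid.
Variable R : realType.
Local Notation vec := (R * R * R)%type.
Implicit Types (u v g : vec) (p q : R * R).

(* The point of the hyperboloid [bform x x = -1] representing [p]; it is chosen
   so that [gfun g p = p.2 * bform (hpoint p) g] (lemma [gfun_hpoint]). *)
Definition hpoint p : vec :=
  (- (2 * p.2)^-1, p.1 / p.2, - ((p.1 ^+ 2 + p.2 ^+ 2) / (2 * p.2))).

Definition acosh (t : R) : R := ln (t + Num.sqrt (t ^+ 2 - 1)).

Lemma bform_geodesic_gt0 g : is_geodesic g -> 0 < bform g g.
Proof. by rewrite /is_geodesic /bform; congr (0 < _); ring. Qed.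

Lemma gfun_hpoint g p : inH p -> gfun g p = p.2 * bform (hpoint p) g.
Proof. by rewrite /inH /gfun /bform /hpoint /= => /lt0r_neq0 hp; field. Qed.

Lemma inH_refl g p : is_geodesic g -> inH p -> inH (refl g p).
Proof.
rewrite /is_geodesic /inH /refl; case: g => [[a b] c] /= hg hp.
case: ifP => [_ //|/negbT a0] /=.
have a2 : 0 < a ^+ 2 by rewrite exprn_even_gt0.
apply: divr_gt0; last by apply: ltr_wpDl; [exact: sqr_ge0 | exact: exprn_gt0].
by rewrite mulr_gt0 // divr_gt0 // pmulr_rgt0.
Qed.

Lemma hpoint_refl g p : is_geodesic g -> inH p ->
  hpoint (refl g p) = vrefl g (hpoint p).
Proof.
move=> /bform_geodesic_gt0 /lt0r_neq0; rewrite /inH /refl /vrefl /vadd /vscale.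
rewrite /hpoint /bform; case: g => [[a b] c]; case: p => x y /= hQ /lt0r_neq0 y0.
case: ifP => [/eqP a0|/negbT a0] /=.
  subst a; have b0 : b != 0 by apply: contraNneq hQ => ->; apply/eqP; ring.
  by apply: vec_ext => /=; field; rewrite ?b0 ?y0.
have y2 : 0 < y ^+ 2 by rewrite exprn_even_gt0.
have a2 : 0 < a ^+ 2 by rewrite exprn_even_gt0.
have n0 : (x - - b / (2 * a)) ^+ 2 + y ^+ 2 != 0.
  by apply: lt0r_neq0; apply: ltr_wpDl; [exact: sqr_ge0 | exact: y2].
have n1 : (x * (2 * a) - - b) ^+ 2 + y ^+ 2 * (4 * a ^+ 2) != 0.
  have ya : 0 < y ^+ 2 * (4 * a ^+ 2) by apply: mulr_gt0 => //; apply: mulr_gt0.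
  by apply: lt0r_neq0; apply: ltr_wpDl; [exact: sqr_ge0 | exact: ya].
have q0 : b ^+ 2 - 4 * a * c != 0 by move: hQ; congr (_ != 0); ring.
by apply: vec_ext => /=; field; rewrite hQ y0 a0 n1.
Qed.

Lemma bform_hpoint p q : inH p -> inH q -> - bform (hpoint p) (hpoint q) =
  1 + ((p.1 - q.1) ^+ 2 + (p.2 - q.2) ^+ 2) / (2 * p.2 * q.2).
Proof.
by rewrite /inH /bform /hpoint /= => /lt0r_neq0 hp /lt0r_neq0 hq; field; rewrite hp hq.
Qed.

Lemma hdist_hpoint p q : inH p -> inH q ->
  hdist p q = acosh (- bform (hpoint p) (hpoint q)).
Proof. by move=> hp hq; rewrite bform_hpoint. Qed.

Lemma bform_hpoint_le p q : inH p -> inH q -> 1 <= - bform (hpoint p) (hpoint q).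
Proof.
move=> hp hq; rewrite bform_hpoint // lerDl divr_ge0 ?addr_ge0 ?sqr_ge0 //.
by rewrite !mulr_ge0 // ltW.
Qed.

Lemma bform_hpoint_eq p q : inH p -> inH q ->
  - bform (hpoint p) (hpoint q) = 1 -> p = q.
Proof.
move=> hp hq; rewrite bform_hpoint // => /eqP; rewrite -subr_eq0 addrAC subrr add0r.
rewrite mulf_eq0 invr_eq0 !mulf_eq0 (gt_eqF hp) (gt_eqF hq) pnatr_eq0 /= orbF.
rewrite paddr_eq0 ?sqr_ge0 // !sqrf_eq0 !subr_eq0.
by case: p q {hp hq} => [x y] [x' y'] /andP[/eqP /= -> /eqP ->].
Qed.

Lemma bform_hpoint_self p : inH p -> bform (hpoint p) (hpoint p) = -1.
Proof.
move=> hp; apply/eqP; rewrite -eqr_oppLR bform_hpoint //.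
by rewrite !subrr expr0n /= addr0 mul0r addr0.
Qed.

Lemma hpoint_inj p q : inH p -> inH q -> hpoint p = hpoint q -> p = q.
Proof.
by move=> hp hq e; apply: bform_hpoint_eq => //; rewrite e bform_hpoint_self ?opprK.
Qed.

Lemma acosh_le (t1 t2 : R) : 1 <= t1 -> t1 <= t2 -> acosh t1 <= acosh t2.
Proof.
move=> h1 h12; rewrite /acosh.
have s1 := sqrtr_ge0 (t1 ^+ 2 - 1); have s2 := sqrtr_ge0 (t2 ^+ 2 - 1).
rewrite ler_ln ?posrE; [|lra|lra].
by rewrite lerD // ler_wsqrtr // lerB // ler_sqr ?nnegrE; lra.
Qed.

Lemma timelike_hpoint u : bform u u < 0 -> u.1.1 < 0 ->
  exists2 p, inH p & u = vscale (Num.sqrt (- bform u u)) (hpoint p).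
Proof.
case: u => [[a b] c] /= hq ha; set l := Num.sqrt _.
have l0 : 0 < l by rewrite /l sqrtr_gt0 oppr_gt0.
have l2 : l ^+ 2 = - bform (a, b, c) (a, b, c) by rewrite /l sqr_sqrtr // oppr_ge0 ltW.
move: l2; rewrite /bform /= => l2.
exists (- b / (2 * a), - l / (2 * a)).
  by rewrite /inH /= mulNr -mulrN -invrN divr_gt0 //; lra.
have a0 : a != 0 by rewrite ltr0_neq0.
have l0' : l != 0 by rewrite lt0r_neq0.
apply: vec_ext => /=; [by field; rewrite ?a0 ?l0' | by field; rewrite ?a0 ?l0' |].
have -> : l * - (((- b / (2 * a)) ^+ 2 + (- l / (2 * a)) ^+ 2) / (2 * (- l / (2 * a))))
   = (b ^+ 2 + l ^+ 2) / (4 * a) by field; rewrite ?a0 ?l0'.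
by rewrite l2; field; rewrite ?a0 ?l0'.
Qed.

Lemma common_orth_hpoint u v : bform u v ^+ 2 < bform u u * bform v v ->
  exists2 p, inH p & bform (hpoint p) u = 0 /\ bform (hpoint p) v = 0.
Proof.
move=> h; set q := lcross u v.
have qq : bform q q < 0 by have := bform_lcross u v; rewrite -/q; lra.
have [r [rr r1 o1 o2]] : exists r,
    [/\ bform r r < 0, r.1.1 < 0, bform r u = 0 & bform r v = 0].
  have o1 := bform_lcrossl u v; have o2 := bform_lcrossr u v.
  have := timelike_first_neq0 qq; rewrite neq_lt => /orP[q1|q1].
    by exists q; split.
  exists (vscale (-1) q); rewrite !bformZl bformZr -/q o1 o2 !mulr0.
  by split => //; [lra | rewrite /= mulN1r oppr_lt0].
have [p hp e] := timelike_hpoint rr r1; exists p => //.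
have l0 : Num.sqrt (- bform r r) != 0 by rewrite gt_eqF // sqrtr_gt0 oppr_gt0.
by split; apply: (mulfI l0); rewrite mulr0 -bformZl -e.
Qed.

(* The orthogonal complement of a causal vector misses the hyperboloid. *)
Lemma causal_bform_hpoint_sign d p p' : bform d d <= 0 -> d != (0, 0, 0) ->
  inH p -> inH p' -> 0 < bform (hpoint p) d * bform (hpoint p') d.
Proof.
move=> hd dn hp hp'.
suff key : forall q q', inH q -> inH q' -> 0 < gfun d q * gfun d q'.
  move: (key p p' hp hp'); rewrite !gfun_hpoint //.
  rewrite mulrACA pmulr_rgt0 //; exact: mulr_gt0.
move: hd dn; case: d => [[a b] c]; rewrite /bform /gfun /inH /= => hd dn.
have side q : 0 < q.2 ->
    0 < a * (a * (q.1 ^+ 2 + q.2 ^+ 2) + b * q.1 + c) \/ [/\ a = 0, b = 0 & c != 0].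
  move=> hq; have [a0|a0] := eqVneq a 0.
    have b0 : b = 0 by move: hd; rewrite a0 !mul0r mulr0 add0r mulr0 subr0; nra.
    by right; split => //; apply: contraNneq dn => c0; rewrite a0 b0 c0.
  left; have : 0 < a ^+ 2 * q.2 ^+ 2.
    by apply: mulr_gt0; rewrite exprn_even_gt0 // ?gt_eqF.
  have := sqr_ge0 (2 * a * q.1 + b); nra.
move=> q q' hq hq'.
have [h1|[-> -> c0]] := side q hq; last by rewrite !mul0r !add0r -expr2 exprn_even_gt0.
have [h2|[a0 _ _]] := side q' hq'; last by move: h1; rewrite a0 mul0r ltxx.
have a2 : 0 < a ^+ 2.
  by rewrite exprn_even_gt0 //; apply: contraTneq h1 => ->; rewrite mul0r ltxx.
have := mulr_gt0 h1 h2; nra.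
Qed.

End Hyperboloid.

Section Words.
Variables (R : realType) (n : nat) (G : 'I_n -> R * R * R).
Hypothesis geoG : forall i, is_geodesic (G i).
Local Notation vec := (R * R * R)%type.
Local Notation same := (same_elt G).
Local Notation reduced := (reduced_word G).
Implicit Types (w u v : seq 'I_n) (p : R * R) (x y : vec).

Lemma bform_side_neq0 i : bform (G i) (G i) != 0.
Proof. by rewrite lt0r_neq0 // bform_geodesic_gt0. Qed.

Definition wact w : vec -> vec := foldr (fun i f x => vrefl (G i) (f x)) id w.

Lemma wact_cat u v x : wact (u ++ v) x = wact u (wact v x).
Proof. by elim: u => //= i u ->. Qed.

Lemma wactD w x y : wact w (vadd x y) = vadd (wact w x) (wact w y).
Proof. by elim: w => //= i w ->; rewrite vreflD. Qed.

Lemma wactZ w k x : wact w (vscale k x) = vscale k (wact w x).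
Proof. by elim: w => //= i w ->; rewrite vreflZ. Qed.

Lemma bform_wact w x y : bform (wact w x) (wact w y) = bform x y.
Proof. by elim: w => //= i w <-; rewrite bform_vrefl ?bform_side_neq0. Qed.

Lemma det3_wact w x y z :
  det3 (wact w x) (wact w y) (wact w z) = (-1) ^+ size w * det3 x y z.
Proof.
elim: w => [|i w IH] /=; first by rewrite mul1r.
by rewrite det3_vrefl ?bform_side_neq0 // IH exprS mulN1r mulNr.
Qed.

Lemma word_eval_cat u v p : word_eval G (u ++ v) p = word_eval G u (word_eval G v p).
Proof. by elim: u => //= i u ->. Qed.

Lemma inH_word_eval w p : inH p -> inH (word_eval G w p).
Proof. by elim: w => //= i w IH hp; apply: inH_refl => //; apply: IH. Qed.

Lemma hpoint_word_eval w p : inH p -> hpoint (word_eval G w p) = wact w (hpoint p).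
Proof.
elim: w => //= i w IH hp.
by rewrite hpoint_refl ?IH //; exact: inH_word_eval.
Qed.

Lemma inH_base : [/\ inH (0 : R, 1 : R), inH (1 : R, 1 : R) & inH (-1 : R, 1 : R)].
Proof. by split; rewrite /inH /=. Qed.

(* Three points of the hyperboloid form a basis, so an element of the group
   determines its linear action [wact]. *)
Lemma vec_hpoint_base x : x =
  vadd (vscale (2 * x.2 - 4 * x.1.1) (hpoint (0, 1)))
    (vadd (vscale ((x.1.2 + 2 * (x.1.1 - x.2)) / 2) (hpoint (1, 1)))
          (vscale ((2 * (x.1.1 - x.2) - x.1.2) / 2) (hpoint (-1, 1)))).
Proof. by apply: vec_ext; rewrite /hpoint /=; field. Qed.

Lemma det3_hpoint_base :
  det3 (hpoint (0, 1)) (hpoint (1, 1)) (hpoint (-1, 1)) = 2^-1 :> R.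
Proof. by rewrite /det3 /hpoint /=; field. Qed.

Lemma same_elt_wact w w' : same w w' -> wact w =1 wact w'.
Proof.
case: inH_base => h1 h2 h3 e x; rewrite [x]vec_hpoint_base !wactD !wactZ.
by rewrite -!hpoint_word_eval // !e.
Qed.

Lemma same_elt_odd w w' : same w w' -> odd (size w) = odd (size w').
Proof.
move=> e; apply: (@signr_inj R); rewrite !signr_odd.
apply: (mulIf (_ : det3 (hpoint (0, 1)) (hpoint (1, 1)) (hpoint (-1, 1)) != 0)).
  by rewrite det3_hpoint_base invr_neq0.
by rewrite -!det3_wact !(same_elt_wact e).
Qed.

Lemma same_elt_sym w w' : same w w' -> same w' w.
Proof. by move=> e p hp; rewrite e. Qed.

Lemma same_elt_trans w1 w2 w3 : same w1 w2 -> same w2 w3 -> same w1 w3.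
Proof. by move=> e1 e2 p hp; rewrite e1 // e2. Qed.

Lemma same_elt_cat u v w w' : same w w' -> same (u ++ w ++ v) (u ++ w' ++ v).
Proof.
move=> e p hp; rewrite !word_eval_cat; congr (word_eval G u _).
by rewrite e //; exact: inH_word_eval.
Qed.

Lemma reflK i p : inH p -> refl (G i) (refl (G i) p) = p.
Proof.
move=> hp; have hp' := inH_refl (geoG i) hp.
apply: hpoint_inj => //; first exact: inH_refl.
by rewrite !hpoint_refl // vreflK // bform_side_neq0.
Qed.

Lemma same_elt_sq i : same [:: i; i] [::].
Proof. by move=> p hp /=; exact: reflK. Qed.

Lemma reduced_prefix u v : reduced (u ++ v) -> reduced u.
Proof.
move=> h u' e; have := h (u' ++ v); rewrite !size_cat leq_add2r; apply.
by have := same_elt_cat [::] v e; rewrite /= ?cats0.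
Qed.

Lemma reduced_suffix u v : reduced (u ++ v) -> reduced v.
Proof.
move=> h v' e; have := h (u ++ v'); rewrite !size_cat leq_add2l; apply.
by have := same_elt_cat u [::] e; rewrite ?cats0.
Qed.

Lemma reduced_same w w' : reduced w -> same w w' -> size w = size w' -> reduced w'.
Proof. by move=> hw e es w'' e'; rewrite -es; apply/hw/(same_elt_trans e). Qed.

Lemma reduced_sq u i v : ~ reduced (u ++ [:: i; i] ++ v).
Proof.
move=> h; have := h (u ++ [::] ++ v) (same_elt_cat u v (same_elt_sq i)).
by rewrite !size_cat /=; lia.
Qed.

Lemma not_reduced w : ~ reduced w -> exists2 w', same w w' & (size w' < size w)%N.
Proof.
move=> h; apply: contra_notP h => hn w' e; rewrite leqNgt; apply/negP => hlt.
by apply: hn; exists w'.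
Qed.

End Words.

Lemma ggrad_dot (R : realType) (g1 g2 : R * R * R) (p : R * R) :
  gfun g1 p = 0 -> gfun g2 p = 0 ->
  (ggrad g1 p).1 * (ggrad g2 p).1 + (ggrad g1 p).2 * (ggrad g2 p).2 = bform g1 g2.
Proof.
case: g1 => [[a1 b1] c1]; case: g2 => [[a2 b2] c2]; case: p => x y.
rewrite /gfun /ggrad /bform /= => h1 h2.
have e1 : a1 * (x ^+ 2 + y ^+ 2) = - b1 * x - c1 by lra.
have e2 : a2 * (x ^+ 2 + y ^+ 2) = - b2 * x - c2 by lra.
have -> : (2 * a1 * x + b1) * (2 * a2 * x + b2) + 2 * a1 * y * (2 * a2 * y) =
  2 * a1 * (a2 * (x ^+ 2 + y ^+ 2)) + 2 * a2 * (a1 * (x ^+ 2 + y ^+ 2))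
  + 2 * a1 * x * b2 + 2 * a2 * x * b1 + b1 * b2 by ring.
by rewrite e1 e2; ring.
Qed.

Lemma cos_pi_div (R : realType) (m : nat) : (2 <= m)%N ->
  [/\ 0 <= cos (pi / m%:R) :> R, cos (pi / m%:R) < 1 :> R & 0 < sin (pi / m%:R) :> R].
Proof.
move=> hm; have m0 : (0 : R) < m%:R by rewrite ltr0n; lia.
have m2 : (2 : R) <= m%:R by rewrite (ler_nat R 2 m).
have p0 := @pi_gt0 R.
have h1 : 0 < pi / m%:R :> R by exact: divr_gt0.
have h2 : pi / m%:R <= pi / 2 :> R.
  by rewrite ler_pdivrMr // mulrC mulrA ler_pdivlMr //; nra.
have hs : 0 < sin (pi / m%:R) :> R by apply: sin_gt0_pi; apply/andP; split => //; lra.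
have hc : 0 <= cos (pi / m%:R) :> R by apply: cos_ge0_pihalf; apply/andP; split; lra.
by split => //; have := cos2Dsin2 (pi / m%:R : R); nra.
Qed.

(* Two distinct points determine the geodesic through them. *)
Lemma orth_hpoint_two_points (R : realType) (a b : R * R * R) p1 p2 q :
  0 < bform a a -> p1 <> p2 -> inH p1 -> inH p2 -> inH q ->
  bform (hpoint p1) a = 0 -> bform (hpoint p2) a = 0 -> bform (hpoint q) a = 0 ->
  bform (hpoint p1) b = 0 -> bform (hpoint p2) b = 0 -> bform (hpoint q) b = 0.
Proof.
move=> aa p12 h1 h2 hq e1 e2 eq f1 f2.
set x1 := hpoint p1 in e1 f1 *; set x2 := hpoint p2 in e2 f2 *; set y := hpoint q in eq *.
set d := bform x1 x2.
have x11 : bform x1 x1 = -1 by apply: bform_hpoint_self.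
have x22 : bform x2 x2 = -1 by apply: bform_hpoint_self.
have hd : d < -1.
  rewrite lt_neqAle; apply/andP; split.
    apply: contra_notN p12 => /eqP dE.
    by apply: bform_hpoint_eq; rewrite // -/x1 -/x2 -/d dE opprK.
  by have := bform_hpoint_le h1 h2; rewrite -/x1 -/x2 -/d; lra.
have dd : d ^+ 2 - 1 != 0 by apply: lt0r_neq0; nra.
set c1 := bform y x1; set c2 := bform y x2.
set mu := (c2 + c1 * d) / (d ^+ 2 - 1); set la := mu * d - c1.
(* [w] is orthogonal to the basis [x1], [x2], [a], hence zero. *)
set w := vadd y (vadd (vscale (- la) x1) (vscale (- mu) x2)).
have w1 : bform w x1 = 0.
  by rewrite /w !bformDl !bformZl x11 (bformC x2 x1) -/d -/c1 /la /mu; field.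
have w2 : bform w x2 = 0.
  by rewrite /w !bformDl !bformZl x22 -/d -/c2 /la /mu; field.
have w3 : bform w a = 0 by rewrite /w !bformDl !bformZl e1 e2 eq; ring.
have g0 : gram3 x1 x2 a != 0.
  by rewrite /gram3 x11 x22 -/d e1 e2; apply: ltr0_neq0; nra.
have : bform w b = 0 by rewrite (bform_orth_gram3 g0 w1 w2 w3) bform0l.
by rewrite /w !bformDl !bformZl f1 f2; lra.
Qed.

Lemma hpoint_cone (R : realType) (q p1 p2 : R * R) (L : R) :
  inH q -> inH p1 -> inH p2 -> 0 <= L ->
  exists2 e, inH e & exists2 la, 0 < la &
    vadd (hpoint q) (vscale L (vadd (hpoint p1) (hpoint p2))) = vscale la (hpoint e).
Proof.
move=> hq hp1 hp2 L0; set z := vadd _ _.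
have Bq1 := bform_hpoint_le hq hp1; have Bq2 := bform_hpoint_le hq hp2.
have B12 := bform_hpoint_le hp1 hp2.
have zz : bform z z < 0.
  rewrite /z !(bformDl, bformDr, bformZl, bformZr) !bform_hpoint_self //.
  rewrite (bformC (hpoint p2) (hpoint p1)) (bformC (hpoint p1) (hpoint q)).
  rewrite (bformC (hpoint p2) (hpoint q)); nra.
have za : z.1.1 < 0.
  move: hq hp1 hp2; rewrite /z /vadd /vscale /hpoint /inH /= => hq hp1 hp2.
  have t1 : 0 < (2 * q.2)^-1 by rewrite invr_gt0; lra.
  have t2 : 0 < (2 * p1.2)^-1 by rewrite invr_gt0; lra.
  have t3 : 0 < (2 * p2.2)^-1 by rewrite invr_gt0; lra.
  nra.
have [e he ze] := timelike_hpoint zz za.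
by exists e => //; exists (Num.sqrt (- bform z z)); rewrite // sqrtr_gt0 oppr_gt0.
Qed.

(* Moving from [a] in the direction [b], the last constraint [a k + L * b k <= 0]
   to be satisfied is met for [L = - a r / b r]. *)
Lemma exit_time (R : realType) n (a b : 'I_n -> R) r0 : 0 < a r0 ->
  (forall k, b k <= 0) -> (forall k, 0 < a k -> b k < 0) ->
  exists r, [/\ 0 < a r, b r < 0 & forall k, a k + (- a r / b r) * b k <= 0].
Proof.
move=> ar0 ble bneg.
have [r br rmax] :=
  @arg_maxP _ _ _ r0 (fun k => b k < 0) (fun k => - a k / b k) (bneg r0 ar0).
set L := - a r / b r in rmax *.
have L0 : 0 < L.
  apply: lt_le_trans (rmax r0 (bneg r0 ar0)).
  by rewrite mulNr -mulrN -invrN divr_gt0 // oppr_gt0 bneg.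
have ar : 0 < a r.
  have -> : a r = - L * b r by rewrite /L; field; exact: ltr0_neq0.
  by rewrite mulNr -mulrN mulr_gt0 // oppr_gt0.
exists r; split => // k; rewrite -/L.
have [bk|bk] := ltrP (b k) 0.
  have : L * b k <= - a k / b k * b k by apply: ler_wnM2r; [exact: ltW | exact: rmax].
  by rewrite divfK ?ltr0_neq0 //; lra.
have -> : b k = 0 by have := ble k; lra.
by rewrite mulr0 addr0 leNgt; apply/negP => ak; have := bneg k ak; lra.
Qed.

Section Roots.
Variables (R : realType) (n : nat) (G : 'I_n -> R * R * R).
Hypothesis coxG : coxeter_polygon G.
Local Notation vec := (R * R * R)%type.
Local Notation P := (polygon G).
Implicit Types (p q : R * R) (x : vec).

Lemma coxeter_geodesic i : is_geodesic (G i).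
Proof. by case: coxG. Qed.

Definition root_norm i : R := Num.sqrt (bform (G i) (G i)).
Definition root i : vec := vscale (root_norm i)^-1 (G i).

Definition sides_meet i j := exists p, [/\ P p, gfun (G i) p = 0 & gfun (G j) p = 0].

Lemma bform_side_gt0 i : 0 < bform (G i) (G i).
Proof. exact/bform_geodesic_gt0/coxeter_geodesic. Qed.

Lemma root_norm_gt0 i : 0 < root_norm i.
Proof. by rewrite sqrtr_gt0 bform_side_gt0. Qed.

Lemma root_norm_sqr i : root_norm i ^+ 2 = bform (G i) (G i).
Proof. by rewrite sqr_sqrtr // ltW // bform_side_gt0. Qed.

Lemma bform_root x i : bform x (root i) = (root_norm i)^-1 * bform x (G i).
Proof. exact: bformZr. Qed.

Lemma bform_root_self i : bform (root i) (root i) = 1.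
Proof.
rewrite bform_root bformZl -root_norm_sqr.
by have := root_norm_gt0 i => /gt_eqF h; field; rewrite h.
Qed.

Lemma bform_roots i j :
  bform (root i) (root j) = (root_norm i)^-1 * (root_norm j)^-1 * bform (G i) (G j).
Proof. by rewrite bform_root bformZl mulrCA mulrA. Qed.

Lemma gfun_root p i : inH p ->
  gfun (G i) p = p.2 * root_norm i * bform (hpoint p) (root i).
Proof.
move=> hp; rewrite gfun_hpoint // bform_root.
by have := root_norm_gt0 i => /gt_eqF h; field; rewrite h.
Qed.

Lemma gfun_le0_root p i : inH p -> (gfun (G i) p <= 0) = (bform (hpoint p) (root i) <= 0).
Proof. by move=> hp; rewrite gfun_root // pmulr_rle0 // mulr_gt0 ?root_norm_gt0. Qed.

Lemma gfun_eq0_root p i : inH p -> (gfun (G i) p = 0) <-> (bform (hpoint p) (root i) = 0).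
Proof.
move=> hp; rewrite gfun_root //; split => [|->]; last by rewrite mulr0.
by move/eqP; rewrite mulf_eq0 gt_eqF ?mulr_gt0 ?root_norm_gt0 // => /eqP.
Qed.

Lemma polygon_inH p : P p -> inH p.
Proof. by case. Qed.

Lemma polygon_root_le0 p i : P p -> bform (hpoint p) (root i) <= 0.
Proof. by case=> hp h; rewrite -gfun_le0_root. Qed.

Lemma polygonP p : inH p -> (forall i, bform (hpoint p) (root i) <= 0) -> P p.
Proof. by move=> hp h; split => // i; rewrite gfun_le0_root. Qed.

Lemma side_points i : exists p q,
  [/\ p <> q, P p, P q, gfun (G i) p = 0 & gfun (G i) q = 0].
Proof.
by case: coxG => _ _ h _ _; have [p [q [? [? [? [? ?]]]]]] := h i; exists p, q.
Qed.

(* The hyperbolic angle at a corner is the Euclidean one between the gradients,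
   whose dot product is [bform] by [ggrad_dot]. *)
Lemma corner_root_cos i j p : i != j -> P p -> gfun (G i) p = 0 -> gfun (G j) p = 0 ->
  exists2 m : nat, (2 <= m)%N & bform (root i) (root j) = - cos (pi / m%:R).
Proof.
move=> ij hP hi hj; case: coxG => _ _ _ _ /(_ i j p ij hP hi hj) [m hm].
rewrite /interior_angle /vangle (ggrad_dot hi hi) (ggrad_dot hj hj) (ggrad_dot hi hj).
rewrite -/(root_norm i) -/(root_norm j) => ha; exists m => //.
set D := bform (root i) (root j).
have DE : bform (G i) (G j) / (root_norm i * root_norm j) = D.
  by rewrite /D bform_roots invfM mulrC.
have D1 : D ^+ 2 <= 1.
  have cs : bform (G i) (G j) ^+ 2 <= bform (G i) (G i) * bform (G j) (G j).
    rewrite -(ggrad_dot hi hi) -(ggrad_dot hj hj) -(ggrad_dot hi hj).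
    set u := ggrad (G i) p; set v := ggrad (G j) p.
    by have := sqr_ge0 (u.1 * v.2 - u.2 * v.1); nra.
  by rewrite -DE expr_div_n exprMn !root_norm_sqr ler_pdivrMr ?mul1r ?mulr_gt0
    ?bform_side_gt0.
have hmem : D \in `[(-1), 1] by rewrite in_itv /=; apply/andP; split; nra.
rewrite DE in ha; have e : acos D = pi - pi / m%:R by lra.
by rewrite -(acosK hmem) e cosB cospi sinpi; ring.
Qed.

End Roots.

Section Vinberg.
Variables (R : realType) (n : nat) (G : 'I_n -> R * R * R).
Hypothesis coxG : coxeter_polygon G.
Local Notation P := (polygon G).
Local Notation root := (root G).
Local Notation sides_meet := (sides_meet G).

Lemma corner_root_range i j p : i != j -> P p -> gfun (G i) p = 0 -> gfun (G j) p = 0 ->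
  -1 < bform (root i) (root j) <= 0.
Proof.
move=> ij hp hi hj; have [m hm ->] := corner_root_cos coxG ij hp hi hj.
by have [? ? _] := cos_pi_div R hm; apply/andP; split; lra.
Qed.

(* Walk from [q] towards the midpoint of side [i] until entering [P]. *)
Lemma side_entry_point i q r0 : inH q -> bform (hpoint q) (root i) = 0 ->
  0 < bform (hpoint q) (root r0) ->
  exists e r, [/\ P e, bform (hpoint e) (root i) = 0, bform (hpoint e) (root r) = 0
                & 0 < bform (hpoint q) (root r)].
Proof.
move=> hq qi qr0; have [p1 [p2 [p12 h1 h2 z1 z2]]] := side_points coxG i.
have hp1 := polygon_inH h1; have hp2 := polygon_inH h2.
move/(gfun_eq0_root coxG i hp1): z1 => z1; move/(gfun_eq0_root coxG i hp2): z2 => z2.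
set y := vadd (hpoint p1) (hpoint p2).
pose a k := bform (hpoint q) (root k).
pose b k := bform y (root k).
have ble k : b k <= 0.
  rewrite /b /y bformDl.
  by have := polygon_root_le0 coxG k h1; have := polygon_root_le0 coxG k h2; lra.
have bneg k : 0 < a k -> b k < 0.
  move=> ak; rewrite lt_neqAle ble andbT; apply: contraTneq ak => bk.
  have [e1 e2] : bform (hpoint p1) (root k) = 0 /\ bform (hpoint p2) (root k) = 0.
    move: bk; rewrite /b /y bformDl.
    by have := polygon_root_le0 coxG k h1; have := polygon_root_le0 coxG k h2; lra.
  have ii : 0 < bform (root i) (root i) by rewrite (bform_root_self coxG).
  by rewrite /a (orth_hpoint_two_points ii p12 hp1 hp2 hq z1 z2 qi e1 e2) ltxx.
have [r [ar br hr]] := exit_time (qr0 : 0 < a r0) ble bneg.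
set L := - a r / b r in hr.
have L0 : 0 <= L.
  rewrite /L mulNr -mulrN -invrN.
  by apply: divr_ge0; [exact: ltW | rewrite oppr_ge0; exact: ltW].
have [e he [la la0 ze]] := hpoint_cone hq hp1 hp2 L0.
have eB k : bform (hpoint e) (root k) = (a k + L * b k) / la.
  have : bform (vscale la (hpoint e)) (root k) = a k + L * b k.
    by rewrite -ze bformDl bformZl.
  by rewrite bformZl => <-; field; rewrite gt_eqF.
exists e, r; split => //.
- by apply: (polygonP coxG he) => k; rewrite eB pmulr_lle0 ?invr_gt0.
- by rewrite eB /a /b qi /y bformDl z1 z2 addr0 mulr0 addr0 mul0r.
- by rewrite eB /L divfK ?ltr0_neq0 // addrN mul0r.
Qed.

(* The angle of [P] at the vertex [e] is at most a right angle, so the angle at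
   [e] between [q] (beyond side [r] on the geodesic of side [i]) and any [f] in
   [P] is obtuse: cosh d(q,f) >= cosh d(q,e) cosh d(e,f). *)
Lemma vertex_obtuse i r e q : i != r -> P e -> bform (hpoint e) (root i) = 0 ->
  bform (hpoint e) (root r) = 0 -> inH q -> bform (hpoint q) (root i) = 0 ->
  0 < bform (hpoint q) (root r) -> forall f, P f ->
  bform (hpoint q) (hpoint f)
  + bform (hpoint q) (hpoint e) * bform (hpoint e) (hpoint f) <= 0.
Proof.
move=> ir hPe ei er hq qi qr f hf; have he := polygon_inH hPe.
have /andP[rho1 rho0] : -1 < bform (root i) (root r) <= 0.
  by apply: (corner_root_range ir hPe); apply/(gfun_eq0_root coxG _ he).
set rho := bform (root i) (root r) in rho1 rho0.
set E := hpoint e in ei er *; set Q := hpoint q in qi qr *; set F := hpoint f.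
set ar := bform Q (root r) in qr.
have r2 : 1 - rho ^+ 2 != 0 by apply: lt0r_neq0; nra.
set tau := ar / (1 - rho ^+ 2).
have tau0 : 0 < tau by rewrite /tau divr_gt0 //; nra.
set sig := - rho * tau.
have sig0 : 0 <= sig by rewrite /sig mulNr oppr_ge0; nra.
(* [w] is orthogonal to the basis [E], [root i], [root r], hence zero. *)
set w := vadd (vadd Q (vscale (bform Q E) E))
              (vadd (vscale (- sig) (root i)) (vscale (- tau) (root r))).
have EE : bform E E = -1 by apply: bform_hpoint_self.
have wZ := (bformZl (bform Q E), bformZl (- sig), bformZl (- tau)).
have ri : bform (root r) (root i) = rho by rewrite bformC.
have wE : bform w E = 0.
  rewrite /w !bformDl !wZ EE (bformC (root i) E) (bformC (root r) E) ei er; ring.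
have wi : bform w (root i) = 0.
  by rewrite /w !bformDl !wZ ei qi ri (bform_root_self coxG) /sig; ring.
have wr : bform w (root r) = 0.
  by rewrite /w !bformDl !wZ er -/ar (bform_root_self coxG) -/rho /sig /tau; field.
have g0 : gram3 E (root i) (root r) != 0.
  by rewrite /gram3 EE ei er !(bform_root_self coxG) -/rho; apply: ltr0_neq0; nra.
have : bform w F = 0 by rewrite (bform_orth_gram3 g0 wE wi wr) bform0l.
rewrite /w !bformDl !wZ => h.
have fi : bform (root i) F <= 0 by rewrite bformC (polygon_root_le0 coxG).
have fr : bform (root r) F <= 0 by rewrite bformC (polygon_root_le0 coxG).
nra.
Qed.

Lemma sides_meet_of_bform_root_ge1 i j : 1 <= bform (root i) (root j) -> sides_meet i j.
Proof.
move=> c1; have [p1 [_ [_ h1 _ z1 _]]] := side_points coxG i.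
have [x1 [_ [_ g1 _ y1 _]]] := side_points coxG j.
have hp1 := polygon_inH h1; have hx1 := polygon_inH g1.
set d := vadd (root i) (vscale (-1) (root j)).
have dd : bform d d <= 0.
  rewrite /d !bformDl !bformDr !(bformZl (-1)) !(bformZr (-1)) !(bform_root_self coxG).
  by rewrite (bformC (root j) (root i)); lra.
have [d0|d0] := eqVneq d (0, 0, 0).
  exists p1; split => //; apply/(gfun_eq0_root coxG j hp1).
  have : bform (hpoint p1) d = 0 by rewrite d0 bformC bform0l.
  by move/(gfun_eq0_root coxG i hp1): z1; rewrite /d bformDr (bformZr (-1)); lra.
move/(gfun_eq0_root coxG i hp1): z1 => z1; move/(gfun_eq0_root coxG j hx1): y1 => y1.
have := causal_bform_hpoint_sign dd d0 hp1 hx1.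
rewrite /d !bformDr !(bformZr (-1)) z1 y1.
by have := polygon_root_le0 coxG j h1; have := polygon_root_le0 coxG i g1; nra.
Qed.

(* The geodesics of sides [i] and [j] cross at some [q]; if [q] were outside [P],
   the points [e] and [f] where the two geodesics enter [P] from [q] would each
   satisfy [vertex_obtuse] with respect to the other, which forces [e = f]. *)
Lemma sides_meet_of_bform_root_lt1 i j :
  bform (root i) (root j) ^+ 2 < 1 -> sides_meet i j.
Proof.
move=> c1; apply: contrapT => nmeet.
have [q hq [qi qj]] : exists2 q, inH q &
    bform (hpoint q) (root i) = 0 /\ bform (hpoint q) (root j) = 0.
  by apply: common_orth_hpoint; rewrite !(bform_root_self coxG) mulr1.
have [r0 hr0] : exists r0, 0 < bform (hpoint q) (root r0).
  apply: contra_notP nmeet => hn; exists q; split.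
  - apply: (polygonP coxG hq) => k; rewrite leNgt; apply/negP => hk.
    by apply: hn; exists k.
  - exact/(gfun_eq0_root coxG i hq).
  - exact/(gfun_eq0_root coxG j hq).
have [e [r [hPe ei er qr]]] := side_entry_point hq qi hr0.
have [f [r' [hPf fj fr qr']]] := side_entry_point hq qj hr0.
have ir : i != r by apply: contraTneq qr => <-; rewrite qi ltxx.
have jr : j != r' by apply: contraTneq qr' => <-; rewrite qj ltxx.
have i1 := vertex_obtuse ir hPe ei er hq qi qr hPf.
have i2 := vertex_obtuse jr hPf fj fr hq qj qr' hPe.
have he := polygon_inH hPe; have hf := polygon_inH hPf.
have A1 := bform_hpoint_le he hf; have B1 := bform_hpoint_le hq he.
have C1 := bform_hpoint_le hq hf.
rewrite (bformC (hpoint f) (hpoint e)) in i2.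
have A2 : - bform (hpoint e) (hpoint f) <= 1 by nra.
have ef : e = f by apply: bform_hpoint_eq => //; lra.
apply: nmeet; exists e; split => //; first exact/(gfun_eq0_root coxG i he).
by apply/(gfun_eq0_root coxG j he); rewrite ef.
Qed.

Lemma root_pair_dichotomy i j : bform (root i) (root j) <= -1 \/ sides_meet i j.
Proof.
have [c1|c1] := lerP (bform (root i) (root j)) (-1); first by left.
right; have [c2|c2] := lerP 1 (bform (root i) (root j)).
  exact: sides_meet_of_bform_root_ge1.
by apply: sides_meet_of_bform_root_lt1; nra.
Qed.

Lemma bform_roots_le0 i j : i != j -> bform (root i) (root j) <= 0.
Proof.
move=> ij; case: (root_pair_dichotomy i j) => [|[p [hp hi hj]]]; first lra.
by have /andP[] := corner_root_range ij hp hi hj.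
Qed.

End Vinberg.

Fixpoint chebU (R : pzRingType) (g : R) (k : nat) : R :=
  match k with
  | 0 => 0
  | 1 => 1
  | (S k' as k1).+1 => g * chebU g k1 - chebU g k'
  end.
Arguments chebU : simpl never.

Lemma chebU0 (R : pzRingType) (g : R) : chebU g 0 = 0. Proof. by []. Qed.
Lemma chebU1 (R : pzRingType) (g : R) : chebU g 1 = 1. Proof. by []. Qed.

Lemma chebUSS (R : pzRingType) (g : R) k :
  chebU g k.+2 = g * chebU g k.+1 - chebU g k.
Proof. by []. Qed.

Lemma chebU_nondecr (R : realFieldType) (g : R) : 2 <= g ->
  forall k, 0 <= chebU g k <= chebU g k.+1.
Proof.
move=> hg; elim => [|k /andP[h1 h2]]; first by rewrite chebU0 chebU1 lexx ler01.
by rewrite chebUSS; apply/andP; split; nra.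
Qed.

Lemma chebU_cos (R : realType) (th : R) : 0 < sin th ->
  forall k, chebU (2 * cos th) k = sin (k%:R * th) / sin th.
Proof.
move=> hs; suff h : forall k, chebU (2 * cos th) k = sin (k%:R * th) / sin th /\
    chebU (2 * cos th) k.+1 = sin (k.+1%:R * th) / sin th by move=> k; case: (h k).
elim=> [|k [IH1 IH2]].
  by rewrite chebU0 chebU1 mul0r sin0 mul0r mul1r divff ?gt_eqF.
split => //; rewrite chebUSS IH1 IH2.
have e1 : k.+2%:R * th = k.+1%:R * th + th by rewrite -[k.+2]addn1 natrD mulrDl mul1r.
have e2 : sin (k%:R * th) = sin (k.+1%:R * th) * cos th - cos (k.+1%:R * th) * sin th.
  by rewrite -sinB -[k.+1]addn1 natrD mulrDl mul1r addrK.
by rewrite e1 sinD e2; field; rewrite gt_eqF.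
Qed.

Lemma ex_minn_prop (Q : nat -> Prop) n0 : Q n0 ->
  exists N, Q N /\ forall M, Q M -> (N <= M)%N.
Proof.
move=> h; have ex : exists N, `[< Q N >] by exists n0; exact/asboolP.
by case: (ex_minnP ex) => N /asboolP QN hmin; exists N; split => // M /asboolP /hmin.
Qed.

Section Dihedral.
Variables (R : realType) (n : nat) (G : 'I_n -> R * R * R).
Hypothesis coxG : coxeter_polygon G.
Local Notation root := (root G).
Local Notation wact := (wact G).
Local Notation same := (same_elt G).
Local Notation reduced := (reduced_word G).
Let geoG := coxeter_geodesic coxG.

Lemma vrefl_root r x :
  vrefl (G r) x = vadd x (vscale (- (2 * bform x (root r))) (root r)).
Proof.
rewrite bform_root /root /vrefl -(root_norm_sqr coxG r).
have := root_norm_gt0 coxG r => /gt_eqF h.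
by apply: vec_ext; rewrite /vadd /vscale /=; field; rewrite h.
Qed.

Lemma bform_hpoint_vrefl p r : inH p ->
  - bform (hpoint p) (vrefl (G r) (hpoint p)) = 1 + 2 * bform (hpoint p) (root r) ^+ 2.
Proof.
move=> hp; rewrite vrefl_root bformDr bform_hpoint_self //.
by rewrite (bformZr (- (2 * bform (hpoint p) (root r)))); ring.
Qed.

(* Reflections with the same root coincide: here [a s a^-1 = y]. *)
Lemma same_elt_of_wact_root a s y :
  wact a (root s) = root y -> same (a ++ [:: s]) (y :: a).
Proof.
move=> e p hp; have hw := inH_word_eval geoG.
apply: hpoint_inj; [exact: hw | exact: hw |].
rewrite !(hpoint_word_eval geoG) // wact_cat /=.
by rewrite !vrefl_root wactD wactZ -e (bform_wact geoG).
Qed.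

Lemma reduced_head_neq r a s : reduced (r :: a ++ [:: s]) -> r != head s a.
Proof.
move=> hr; apply/eqP => rh; move: hr; rewrite rh; case: a {rh} => [|x a] /=.
  exact: (reduced_sq geoG (u := [::]) (v := [::])).
exact: (reduced_sq geoG (u := [::]) (v := a ++ [:: s])).
Qed.

Lemma reduced_conj_contra x a s :
  reduced (x :: a ++ [:: s]) -> ~ same (a ++ [:: s]) (x :: a).
Proof.
move=> hr e; have e1 := same_elt_cat geoG [:: x] [::] e.
have e2 := same_elt_cat geoG [::] a (same_elt_sq geoG x).
rewrite /= !cats0 in e1 e2.
by have := hr a (same_elt_trans e1 e2); rewrite /= size_cat /=; lia.
Qed.

Section Pair.
Variables s t : 'I_n.
Hypothesis st : s != t.
Local Notation c := (bform (root s) (root t)).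
Local Notation dihedral a := (all (mem [:: s; t]) a).

Definition other x := if x == s then t else s.

Let ts : (t == s) = false. Proof. by rewrite eq_sym (negbTE st). Qed.

Lemma other_neq x y : x \in [:: s; t] -> y \in [:: s; t] -> x != y -> x = other y.
Proof. by rewrite /other !inE => /orP[] /eqP -> /orP[] /eqP ->; rewrite ?eqxx ?ts. Qed.

Lemma otherK x : x \in [:: s; t] -> other (other x) = x.
Proof. by rewrite /other !inE => /orP[] /eqP ->; rewrite ?eqxx /= ?ts ?eqxx. Qed.

Lemma bform_root_other x : x \in [:: s; t] -> bform (root x) (root (other x)) = c.
Proof. by rewrite /other !inE => /orP[] /eqP ->; rewrite ?eqxx ?ts // bformC. Qed.

Lemma head_dihedral a : dihedral a -> head s a \in [:: s; t].
Proof. by case: a => [|x a] /=; [rewrite inE eqxx | case/andP]. Qed.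

Lemma wact_dihedral_root a : dihedral a -> reduced (a ++ [:: s]) ->
  wact a (root s) = vadd (vscale (chebU (- 2 * c) (size a).+1) (root (head s a)))
                         (vscale (chebU (- 2 * c) (size a)) (root (other (head s a)))).
Proof.
elim: a => [|r a IH].
  move=> _ _ /=; rewrite /other eqxx chebU0 chebU1.
  by apply: vec_ext; rewrite /vadd /vscale /=; ring.
move=> /andP[hr ha] hred /=.
rewrite IH //; last exact: (reduced_suffix geoG (u := [:: r])).
rewrite chebUSS.
have hh := head_dihedral ha; set h := head s a in hh hred *.
rewrite (other_neq hr hh (reduced_head_neq hred)) otherK //.
set U1 := chebU _ (size a).+1; set U0 := chebU _ (size a).
rewrite vrefl_root bformDl (bformZl U1) (bformZl U0) bform_root_other //.
rewrite (bform_root_self coxG).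
by apply: vec_ext; rewrite /vadd /vscale /=; ring.
Qed.

(* [wact a (root s)] would be the root of the letter preceding [a] once [a] has
   [m - 1] letters, so that letter and [a s] would cancel. *)
Lemma dihedral_size_lt m a : (2 <= m)%N -> c = - cos (pi / m%:R) ->
  dihedral a -> reduced (a ++ [:: s]) -> (size a < m)%N.
Proof.
move=> hm cm ha hred; rewrite ltnNge; apply/negP => ms.
have [_ _ s0] := cos_pi_div R hm; set th := pi / m%:R in cm s0.
have m0 : (0 : R) < m%:R by rewrite ltr0n; lia.
have eg : - 2 * c = 2 * cos th by rewrite cm; ring.
have [k kE] : {k | (k + m = size a)%N} by exists (size a - m)%N; rewrite subnK.
have ea : a = take k a ++ nth s a k :: drop k.+1 a.
  by rewrite -drop_nth ?cat_take_drop // -kE -[X in (X < _)%N]addn0 ltn_add2l (ltnW hm).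
set x := nth s a k in ea; set a' := drop k.+1 a in ea.
have sa' : size a' = m.-1 by rewrite /a' size_drop -kE -addn1 subnDl subn1.
have := ha; rewrite ea all_cat /= => /and3P[_ hx ha'].
have hred' : reduced (x :: a' ++ [:: s]).
  by move: hred; rewrite ea -catA /=; exact: reduced_suffix.
have Um : chebU (- 2 * c) m = 0.
  rewrite eg chebU_cos // (_ : m%:R * th = pi) ?sinpi ?mul0r //.
  by rewrite /th; field; rewrite gt_eqF.
have Um1 : chebU (- 2 * c) m.-1 = 1.
  rewrite eg chebU_cos // (_ : m.-1%:R * th = pi - th).
    by rewrite sinB sinpi cospi mul0r sub0r mulN1r opprK divff // gt_eqF.
  have em : (m%:R : R) = m.-1%:R + 1 by rewrite natr1 (prednK (ltnW hm)).
  by rewrite /th em; field; rewrite -em gt_eqF.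
have e : wact a' (root s) = root (other (head s a')).
  rewrite wact_dihedral_root //; last exact: (reduced_suffix geoG (u := [:: x])).
  rewrite sa' (prednK (ltnW hm)) Um Um1.
  by apply: vec_ext; rewrite /vadd /vscale /=; ring.
have xo := other_neq hx (head_dihedral ha') (reduced_head_neq hred').
by apply: (reduced_conj_contra hred'); rewrite xo; exact: same_elt_of_wact_root.
Qed.

Lemma chebU_dihedral_ge0 a : dihedral a -> reduced (a ++ [:: s]) ->
  0 <= chebU (- 2 * c) (size a).+1 /\ 0 <= chebU (- 2 * c) (size a).
Proof.
move=> ha hred; case: (root_pair_dichotomy coxG s t) => [hc | [p [hp hs ht]]].
  have hg : 2 <= - 2 * c by lra.
  by have /andP[h1 h2] := chebU_nondecr hg (size a); split; lra.
have [m hm cm] := corner_root_cos coxG st hp hs ht.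
have lt := dihedral_size_lt hm cm ha hred.
have [_ _ s0] := cos_pi_div R hm; set th := pi / m%:R in cm s0.
have m0 : (0 : R) < m%:R by rewrite ltr0n; lia.
have eg : - 2 * c = 2 * cos th by rewrite cm; ring.
have U k : (k <= m)%N -> 0 <= chebU (- 2 * c) k.
  move=> km; rewrite eg chebU_cos //; apply: divr_ge0; last exact: ltW.
  apply: sin_ge0_pi; apply/andP; split.
    by rewrite mulr_ge0 ?ler0n // divr_ge0 // ltW // pi_gt0.
  rewrite /th mulrA ler_pdivrMr // mulrC ler_wpM2l ?ler_nat //.
  exact: ltW (pi_gt0 R).
by split; apply: U; lia.
Qed.

Lemma wact_dihedral_root_cone a : dihedral a -> reduced (a ++ [:: s]) ->
  exists A B, [/\ 0 <= A, 0 <= B &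
                  wact a (root s) = vadd (vscale A (root s)) (vscale B (root t))].
Proof.
move=> ha hred; have [u1 u0] := chebU_dihedral_ge0 ha hred.
rewrite wact_dihedral_root //; move: (head_dihedral ha); rewrite /other !inE.
set U1 := chebU _ (size a).+1 in u1 *; set U0 := chebU _ (size a) in u0 *.
case/orP => /eqP ->; rewrite ?eqxx; first by exists U1, U0.
rewrite ts; exists U0, U1.
by split => //; apply: vec_ext; rewrite /vadd /vscale /=; ring.
Qed.

End Pair.
End Dihedral.

Section Tits.
Variables (R : realType) (n : nat) (G : 'I_n -> R * R * R).
Hypothesis coxG : coxeter_polygon G.
Local Notation vec := (R * R * R)%type.
Local Notation P := (polygon G).
Local Notation root := (root G).
Local Notation wact := (wact G).
Local Notation same := (same_elt G).
Local Notation reduced := (reduced_word G).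
Let geoG := coxeter_geodesic coxG.

(* The roots, and hence their nonnegative combinations, are [positive_vec]. *)
Definition positive_vec (x : vec) := forall p, P p -> bform (hpoint p) x <= 0.

Lemma positive_cone A B x y : 0 <= A -> 0 <= B -> positive_vec x -> positive_vec y ->
  positive_vec (vadd (vscale A x) (vscale B y)).
Proof.
move=> hA hB hx hy p hp; rewrite bformDr !bformZr.
by have := hx p hp; have := hy p hp; nra.
Qed.

Lemma shorten_prefix u v a y : reduced u -> same (v ++ a) u ->
  (size v + size a = size u)%N -> ~ reduced (v ++ [:: y]) ->
  exists v', [/\ (size v' < size v)%N, same (v' ++ y :: a) u &
                 (size v' + size (y :: a) = size u)%N].
Proof.
move=> hu hva hsz /not_reduced [v' e hlt].
have hpar := same_elt_odd geoG e.
rewrite size_cat /= addn1 in hlt hpar.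
have hlt' : (size v' < size v)%N.
  move: hlt; rewrite ltnS leq_eqVlt => /orP[/eqP hv|//].
  by move: hpar; rewrite hv /=; case: (odd _).
have e2 : same (v' ++ y :: a) u.
  have s1 := same_elt_cat geoG [::] (y :: a) (same_elt_sym e).
  have s2 := same_elt_cat geoG v a (same_elt_sq geoG y).
  rewrite /= -catA /= in s1 s2; apply: same_elt_trans s1 _.
  exact: same_elt_trans s2 hva.
exists v'; split => //.
by have := hu _ (same_elt_sym e2); rewrite size_cat /=; lia.
Qed.

(* Take the prefix [v] of minimal length. *)
Lemma min_dihedral_factor w s t : reduced (rcons w t ++ [:: s]) ->
  exists v a, [/\ all (mem [:: s; t]) a, same (v ++ a) (rcons w t),
     (size v <= size w)%N, reduced (v ++ a ++ [:: s]) &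
     reduced (v ++ [:: s]) /\ reduced (v ++ [:: t])].
Proof.
move=> hred; have hw : reduced (rcons w t) := reduced_prefix geoG hred.
pose Q N := exists v a, [/\ all (mem [:: s; t]) a, same (v ++ a) (rcons w t),
                          (size v + size a = size (rcons w t))%N & size v = N].
have Q0 : Q (size w).
  by exists w, [:: t]; rewrite cats1 size_rcons addn1 /= !inE eqxx orbT.
have [N [[v [a [ha hva hsz hN]]] hmin]] := ex_minn_prop Q0.
have shift y : y \in [:: s; t] -> reduced (v ++ [:: y]).
  move=> hy; apply: contrapT => nv.
  have [v' [lt e hs]] := shorten_prefix hw hva hsz nv.
  have : Q (size v') by exists v', (y :: a); split; rewrite //= hy ha.
  by move/hmin; rewrite -hN leqNgt lt.
exists v, a; split => //; first by rewrite hN; exact: hmin.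
  apply: (reduced_same hred); last by rewrite !size_cat -hsz addnA.
  by have := same_elt_cat geoG [::] [:: s] (same_elt_sym hva); rewrite /= catA.
by split; apply: shift; rewrite !inE eqxx ?orbT.
Qed.

(* Tits' lemma: [w t] is a shortest prefix [v], with [v s] and [v t] reduced,
   followed by a dihedral word in [s] and [t]. *)
Lemma wact_root_positive w s : reduced (w ++ [:: s]) -> positive_vec (wact w (root s)).
Proof.
move: {2}(size w) (leqnn (size w)) => k; elim: k w s => [|k IH] w s.
  by rewrite leqn0 size_eq0 => /eqP -> _ p; exact: polygon_root_le0.
case/lastP: w => [|w t] hsz hred; first by move=> p; exact: polygon_root_le0.
have st : s != t.
  apply/eqP => st; move: hred; rewrite st -cats1 -catA /=.
  exact: (reduced_sq geoG (u := w) (v := [::])).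
have [v [a [ha hva hv hvas [hvs hvt]]]] := min_dihedral_factor hred.
have hk : (size v <= k)%N by rewrite size_rcons ltnS in hsz; exact: leq_trans hv hsz.
have [A [B [hA hB eA]]] := wact_dihedral_root_cone coxG st ha (reduced_suffix geoG hvas).
rewrite -(same_elt_wact geoG hva) wact_cat eA wactD (wactZ G v A) (wactZ G v B).
exact: positive_cone (IH v s hk hvs) (IH v t hk hvt).
Qed.

Lemma wact_rcons_root u r x : wact (rcons u r) x =
  vadd (wact u x) (vscale (- (2 * bform x (root r))) (wact u (root r))).
Proof.
rewrite -cats1 wact_cat /= (vrefl_root coxG) wactD.
by rewrite (wactZ G u (- (2 * bform x (root r)))).
Qed.

Lemma wact_root_sub_positive u s : reduced u -> s \notin u ->
  positive_vec (vadd (wact u (root s)) (vscale (-1) (root s))).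
Proof.
elim/last_ind: u => [|u r IH] hred hs p hp.
  by rewrite /= bformDr (bformZr (-1)); lra.
have hu : reduced u by apply: (reduced_prefix geoG (v := [:: r])); rewrite cats1.
move: hs; rewrite mem_rcons inE negb_or => /andP[sr su].
have hur : reduced (u ++ [:: r]) by rewrite cats1.
have := IH hu su p hp; have := wact_root_positive hur hp.
have := bform_roots_le0 coxG sr.
rewrite wact_rcons_root !bformDr !(bformZr (-1)).
rewrite (bformZr (- (2 * bform (root s) (root r)))).
nra.
Qed.

Lemma bform_hpoint_wact_ge w s x : reduced w -> s \in w -> P x ->
  1 + 2 * bform (hpoint x) (root s) ^+ 2 <= - bform (hpoint x) (wact w (hpoint x)).
Proof.
elim/last_ind: w => [|u r IH] hred hs hx; first by rewrite in_nil in hs.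
have hxH := polygon_inH hx.
have hu : reduced u by apply: (reduced_prefix geoG (v := [:: r])); rewrite cats1.
have hur : reduced (u ++ [:: r]) by rewrite cats1.
have t1 := wact_root_positive hur hx.
have t2 := polygon_root_le0 coxG r hx.
rewrite wact_rcons_root bformDr (bformZr (- (2 * bform (hpoint x) (root r)))).
case: (boolP (s \in u)) => su; first by have := IH hu su hx; nra.
have er : s = r by move: hs; rewrite mem_rcons inE (negbTE su) orbF => /eqP.
subst r.
have h1 : 1 <= - bform (hpoint x) (wact u (hpoint x)).
  rewrite -(hpoint_word_eval geoG u hxH).
  exact: bform_hpoint_le hxH (inH_word_eval geoG u hxH).
have := wact_root_sub_positive hu su hx; rewrite bformDr (bformZr (-1)).
nra.
Qed.

End Tits.

Theorem lemma9 (R : realType) (n : nat) (G : 'I_n -> R * R * R)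
  (w : seq 'I_n) :
  coxeter_polygon G -> reduced_word G w ->
  forall (x : R * R) (s : 'I_n), polygon G x -> s \in w ->
    hdist x (refl (G s) x) <= hdist x (word_eval G w x).
Proof.
move=> coxG hred x s hx hs.
have geoG := coxeter_geodesic coxG; have hxH := polygon_inH hx.
have hsx := inH_refl (geoG s) hxH; have hwx := inH_word_eval geoG w hxH.
rewrite !hdist_hpoint // (hpoint_refl (geoG s) hxH) (hpoint_word_eval geoG w hxH).
apply: acosh_le; rewrite (bform_hpoint_vrefl coxG s hxH).
  by have := sqr_ge0 (bform (hpoint x) (root G s)); lra.
exact: bform_hpoint_wact_ge.
Qed.
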